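(* Let $d\ge1$, let $G$ be a $k$-fold $\mathcal{R}_d$-circuit ($k\ge1$) and let $G*v$ be its cone over a new vertex $v$. If all edges incident with $v$ lie in the same part of the principal partition of $G*v$ (as a $k$-fold $\mathcal{R}_{d+1}$-circuit), then $k=1$.
   Context: For a graph $G=(V,E)$ and a generic $p:V\to\mathbb{R}^d$ (coordinates algebraically independent over $\mathbb{Q}$), the rigidity matrix has a row for each $uv\in E$ with $p(u)-p(v)$ in the $d$ columns of $u$, $p(v)-p(u)$ in those of $v$, zeros elsewhere; $\mathcal{R}_d$ is its row matroid, with rank $r_d$. A set of edges is cyclic if it is a union of $\mathcal{R}_d$-circuits; $(V,D)$ is a $k$-fold $\mathcal{R}_d$-circuit if $D$ is cyclic and $r_d(D)=|D|-k$. Its principal partition is the partition $\{A_1,\dots,A_\ell\}$ of $D$ such that $\{D\setminus A_i\}$ is exactly the set of $(k-1)$-fold $\mathcal{R}_d$-circuits contained in $D$. The cone $G*v$ is obtained by adding a new vertex $v$ adjacent to every vertex of $G$; $G*v$ is a $k$-fold $\mathcal{R}_{d+1}$-circuit whenever $G$ is a $k$-fold $\mathcal{R}_d$-circuit. *)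

From HB Require Import structures.
From mathcomp Require Import all_boot all_order all_algebra.
From mathcomp Require Import reals.
From mathcomp Require Import mpoly.

Set Implicit Arguments.
Unset Strict Implicit.
Unset Printing Implicit Defensive.

Import Order.TTheory GRing.Theory Num.Theory.
Local Open Scope ring_scope.

(* Graphs on the vertex set 'I_n.  An edge uv is stored as the ordered pair
   (u, v) with u < v, and an edge set is a finite set of such pairs. *)
Definition edgeset (n : nat) := {set 'I_n * 'I_n}.

Definition simple_edges n (E : edgeset n) : Prop :=
  forall e, e \in E -> (e.1 < e.2)%N.

(* A realization p : V -> R^d is the n x d matrix whose u-th row is p(u). *)

(* The n*d columns
   are indexed via mxvec (column (u, j) <-> coordinate j of vertex u). *)
Definition rig_row (R : nzRingType) n d (p : 'M[R]_(n, d)) (e : 'I_n * 'I_n)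
  : 'rV[R]_(n * d) :=
  mxvec (\matrix_(w < n, j < d)
           (if w == e.1 then p e.1 j - p e.2 j
            else if w == e.2 then p e.2 j - p e.1 j else 0)).

Definition rig_rank (R : fieldType) n d (p : 'M[R]_(n, d)) (X : edgeset n) : nat :=
  \rank (\sum_(e in X) <<rig_row p e>>)%MS.

(* p is generic: its n*d coordinates are algebraically independent over Q,
   i.e. no nonzero rational polynomial in n*d variables vanishes at them. *)
Definition generic (R : realType) n d (p : 'M[R]_(n, d)) : Prop :=
  forall P : {mpoly rat[n * d]}, P != 0 ->
    mmap (fun c : rat => ratr c) (fun i => mxvec p 0 i) P != 0.

Section MatroidNotions.
Variables (n : nat) (r : edgeset n -> nat).

Definition dependent (X : edgeset n) : Prop := (r X < #|X|)%N.

Definition circuit (C : edgeset n) : Prop :=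
  dependent C /\ forall Y : edgeset n, Y \proper C -> ~ dependent Y.

Definition cyclic (D : edgeset n) : Prop :=
  exists Cs : {set edgeset n},
    (forall C, C \in Cs -> circuit C) /\ D = \bigcup_(C in Cs) C.

Definition kfold_circuit (k : nat) (D : edgeset n) : Prop :=
  cyclic D /\ (r D + k = #|D|)%N.

Definition principal_partition (k : nat) (D : edgeset n)
    (P : {set edgeset n}) : Prop :=
  partition P D /\
  forall X : edgeset n, X \subset D ->
    (kfold_circuit k.-1 X <-> exists2 A, A \in P & X = D :\: A).
End MatroidNotions.

(* The cone G*v: vertices 'I_n embedded into 'I_n.+1, v = ord_max. *)
Definition vemb n (u : 'I_n) : 'I_n.+1 := widen_ord (leqnSn n) u.

Definition cone_star n : edgeset n.+1 :=
  [set (vemb u, ord_max) | u : 'I_n].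

Definition cone n (E : edgeset n) : edgeset n.+1 :=
  [set (vemb e.1, vemb e.2) | e in E] :|: cone_star n.

From HB Require Import structures.
From mathcomp Require Import all_boot all_order all_algebra.
From mathcomp Require Import reals mpoly.
From mathcomp Require Import zify ring.
From Stdlib Require Import Classical.

Set Implicit Arguments.
Unset Strict Implicit.
Unset Printing Implicit Defensive.

Import Order.TTheory GRing.Theory Num.Theory.
Local Open Scope ring_scope.

(* Let X be the complement, in the cone G*v, of the part A of the principal
   partition that contains the star of v.  X is a (k-1)-fold circuit inside
   the copy L of G in G*v, hence r_(d+1)(L) <= |G| - k + 1.  Conversely, if
   k >= 2 then G carries two independent stresses w1, w2.  Keep p in the
   first d coordinates and put s(u) in the last one: the rigidity matrix of L
   becomes [R(G, p) | D(s)], and a stress w sends D(s) to s L(w), where L(w)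
   is the w-weighted Laplacian.  L(w1) and L(w2) are independent symmetric
   matrices, and for such a pair some s makes s L(w1) and s L(w2)
   independent.  So r_(d+1)(L) >= r_d(G) + 2 = |G| - k + 2 at this special
   realization, and a fortiori at a generic one. *)

Definition rig_mx (R : nzRingType) n d (x : 'M[R]_(n, d)) m
    (F : 'I_m -> 'I_n * 'I_n) : 'M[R]_(m, n * d) :=
  \matrix_i rig_row x (F i).

Lemma map_rig_mx (R S : nzRingType) (f : {additive R -> S}) n d
    (x : 'M[R]_(n, d)) m (F : 'I_m -> 'I_n * 'I_n) :
  map_mx f (rig_mx x F) = rig_mx (map_mx f x) F.
Proof.
apply/row_matrixP => i; rewrite -map_row !rowK /rig_row map_mxvec.
congr mxvec; apply/matrixP => u j; rewrite !mxE.
by case: ifP => _; [|case: ifP => _]; rewrite ?raddfB ?raddf0 ?mxE.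
Qed.

Section RigidityRank.
Variable R : fieldType.

Lemma rig_rank_mx n d (x : 'M[R]_(n, d)) (Y : edgeset n) m
    (F : 'I_m -> 'I_n * 'I_n) :
  (forall i, F i \in Y) -> (forall e, e \in Y -> exists i, F i = e) ->
  rig_rank x Y = \rank (rig_mx x F).
Proof.
move=> FY YF; apply: eqmx_rank; apply/andP; split.
  apply/sumsmx_subP => e /YF [i <-]; rewrite genmxE -(rowK (fun i => rig_row x (F i))).
  exact: row_sub.
apply/row_subP => i; rewrite rowK (sumsmx_sup (F i)) ?genmxE //.
Qed.

Lemma rig_rank_enum n d (x : 'M[R]_(n, d)) (Y : edgeset n) :
  rig_rank x Y = \rank (rig_mx x (@enum_val _ Y)).
Proof.
apply: rig_rank_mx => [i|e eY]; first exact: enum_valP.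
by exists (enum_rank_in eY e); rewrite enum_rankK_in.
Qed.

Lemma rig_rank_leq_card n d (x : 'M[R]_(n, d)) (Y : edgeset n) :
  (rig_rank x Y <= #|Y|)%N.
Proof. by rewrite rig_rank_enum rank_leq_row. Qed.

Lemma rig_rank_subset n d (x : 'M[R]_(n, d)) (X Y : edgeset n) : X \subset Y ->
  (rig_rank x Y + #|X| <= rig_rank x X + #|Y|)%N.
Proof.
move=> sXY; have rYX := rig_rank_leq_card x (Y :\: X).
rewrite /rig_rank in rYX *; rewrite (big_setID X) /= (setIidPr sXY).
rewrite -(cardsID X Y) (setIidPr sXY).
apply: leq_trans (leq_add (mxrank_adds_leqif _ _) (leqnn _)) _.
by rewrite -addnA leq_add2l addnC leq_add2l.
Qed.

End RigidityRank.

Section RankBounds.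
Variable R : fieldType.

Lemma mxrank_minor m n (A : 'M[R]_(m, n)) :
  exists f : 'I_(\rank A) -> 'I_m, exists g : 'I_(\rank A) -> 'I_n,
    \det (mxsub f g A) != 0.
Proof.
set B := rowsub (maxrankfun A) A.
have rB : \rank B = \rank A by apply/eqP; exact: maxrowsub_free.
have fBT : row_full B^T by rewrite /row_full mxrank_tr rB.
exists (maxrankfun A), (fullrankfun fBT).
have := fullrowsub_unit fBT; rewrite unitmxE unitfE.
suff -> : rowsub (fullrankfun fBT) B^T = (mxsub (maxrankfun A) (fullrankfun fBT) A)^T.
  by rewrite det_tr.
by apply/matrixP => i j; rewrite !mxE.
Qed.

Lemma mxrank_mxsub m n r (f : 'I_r -> 'I_m) (g : 'I_r -> 'I_n) (A : 'M[R]_(m, n)) :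
  (\rank (mxsub f g A) <= \rank A)%N.
Proof.
rewrite -[X in mxsub _ _ X]mulmx1 mxsub_mul.
exact: leq_trans (mxrankM_maxl _ _) (mxrankS (rowsub_sub _ _)).
Qed.

Lemma minor_neq0_rank m n r (f : 'I_r -> 'I_m) (g : 'I_r -> 'I_n) (A : 'M[R]_(m, n)) :
  \det (mxsub f g A) != 0 -> (r <= \rank A)%N.
Proof.
rewrite -unitfE -unitmxE -row_free_unit => /eqP <-; exact: mxrank_mxsub.
Qed.

Lemma rank_row_mx_ker m n1 n2 (M : 'M[R]_(m, n1)) (N : 'M[R]_(m, n2)) :
  (\rank M + \rank (kermx M *m N) <= \rank (row_mx M N))%N.
Proof.
have kerMN : (kermx (row_mx M N) <= kermx M :&: kermx N)%MS.
  have /eqP := mulmx_ker (row_mx M N).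
  rewrite mul_mx_row row_mx_eq0 => /andP [/eqP kM /eqP kN].
  by rewrite sub_capmx; apply/andP; split; apply/sub_kermxP.
have := mxrankS kerMN; have := mxrank_mul_ker (kermx M) N.
have := mxrank_ker (row_mx M N); have := mxrank_ker M.
have := rank_leq_row M; have := rank_leq_row (row_mx M N).
lia.
Qed.

End RankBounds.

Section GenericRank.
Variable R : realType.

Definition indet_mx n d : 'M[{mpoly rat[n * d]}]_(n, d) :=
  \matrix_(u, j) 'X_(mxvec_index u j).

Lemma eval_indet_mx n d (x : 'M[R]_(n, d)) :
  map_mx (mmap (@ratr R) (fun i => mxvec x 0 i)) (indet_mx n d) = x.
Proof. by apply/matrixP => u j; rewrite !mxE mmapX mmap1U mxvecE. Qed.

(* A nonzero minor of the rigidity matrix at x is a nonzero rational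
   polynomial in the coordinates, so it cannot vanish at a generic point. *)
Lemma generic_rank_max n d (x q : 'M[R]_(n, d)) m (F : 'I_m -> 'I_n * 'I_n) :
  generic q -> (\rank (rig_mx x F) <= \rank (rig_mx q F))%N.
Proof.
move=> gen_q; have [f [g minor_x]] := mxrank_minor (rig_mx x F).
set P := \det (mxsub f g (rig_mx (indet_mx n d) F)).
have evalP y : mmap (@ratr R) (fun i => mxvec y 0 i) P
               = \det (mxsub f g (rig_mx y F)).
  by rewrite -det_map_mx map_mxsub map_rig_mx eval_indet_mx.
apply: (@minor_neq0_rank _ _ _ _ f g); rewrite -evalP; apply: gen_q.
by apply: contraNneq minor_x => P0; rewrite -evalP P0 rmorph0.
Qed.

End GenericRank.

Lemma vemb_inj n : injective (@vemb n).
Proof. by move=> u w /(congr1 val) /= /val_inj. Qed.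

Lemma unlift_vemb n (u : 'I_n) : unlift ord_max (vemb u) = Some u.
Proof.
suff -> : vemb u = lift ord_max u by rewrite liftK.
by apply: val_inj; rewrite [RHS]lift_max.
Qed.

Definition lift_edge {n} (e : 'I_n * 'I_n) : 'I_n.+1 * 'I_n.+1 := (vemb e.1, vemb e.2).

Lemma lift_edge_inj n : injective (@lift_edge n).
Proof. by move=> [a b] [a0 b0] [/val_inj -> /val_inj ->]. Qed.

Lemma cone_diff_star n (G : edgeset n) (A : edgeset n.+1) :
  cone_star n \subset A -> cone G :\: A \subset lift_edge @: G.
Proof.
move=> starA; apply/subsetP => e; rewrite /cone !inE => /andP [eA /orP [//|eS]].
by rewrite (subsetP starA e eS) in eA.
Qed.

Lemma card_lift_edges n (G : edgeset n) : #|lift_edge @: G| = #|G|.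
Proof. exact/card_imset/lift_edge_inj. Qed.

(* The rigidity matrix of F in dimension one, at the realization s. *)
Definition diff_mx (R : nzRingType) n m (F : 'I_m -> 'I_n * 'I_n) (s : 'rV[R]_n)
    : 'M[R]_(m, n) :=
  \matrix_(i, u) (if u == (F i).1 then s 0 (F i).1 - s 0 (F i).2
                  else if u == (F i).2 then s 0 (F i).2 - s 0 (F i).1 else 0).

Section ConeRealization.
Variable R : fieldType.

(* The apex carries no edge of the lifted base; it is put at the origin. *)
Definition cone_real n d (p : 'M[R]_(n, d)) (s : 'rV[R]_n) : 'M[R]_(n.+1, d.+1) :=
  \matrix_(u, j) match unlift ord_max u, unlift ord_max j with
                 | Some u', Some j' => p u' j'
                 | Some u', None => s 0 u'
                 | None, _ => 0
                 end.

Definition base_coords n d (r : 'rV[R]_(n.+1 * d.+1)) : 'rV[R]_(n * d) :=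
  mxvec (\matrix_(u, j) vec_mx r (vemb u) (lift ord_max j)).

Definition last_coords n d (r : 'rV[R]_(n.+1 * d.+1)) : 'rV[R]_n :=
  \row_u vec_mx r (vemb u) ord_max.

Lemma base_coords_is_linear n d : linear (@base_coords n d).
Proof.
move=> a r r'; rewrite /base_coords -linearP; congr mxvec.
by apply/matrixP => u j; rewrite !mxE.
Qed.

Lemma last_coords_is_linear n d : linear (@last_coords n d).
Proof. by move=> a r r'; apply/rowP => u; rewrite !mxE. Qed.

HB.instance Definition _ n d :=
  GRing.isLinear.Build R _ _ _ (@base_coords n d) (@base_coords_is_linear n d).
HB.instance Definition _ n d :=
  GRing.isLinear.Build R _ _ _ (@last_coords n d) (@last_coords_is_linear n d).

Lemma rig_mx_cone_base n d (p : 'M[R]_(n, d)) s m (F : 'I_m -> 'I_n * 'I_n) :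
  rig_mx (cone_real p s) (lift_edge \o F) *m lin1_mx (@base_coords n d) = rig_mx p F.
Proof.
apply/row_matrixP => i.
rewrite row_mul !rowK mul_rV_lin1 /= /base_coords /rig_row mxvecK.
congr mxvec; apply/matrixP => u j.
by rewrite !mxE /= !(inj_eq (@vemb_inj n)) !unlift_vemb !liftK.
Qed.

Lemma rig_mx_cone_last n d (p : 'M[R]_(n, d)) s m (F : 'I_m -> 'I_n * 'I_n) :
  rig_mx (cone_real p s) (lift_edge \o F) *m lin1_mx (@last_coords n d) = diff_mx F s.
Proof.
apply/row_matrixP => i.
rewrite row_mul !rowK mul_rV_lin1 /= /last_coords /rig_row mxvecK.
by apply/rowP => u; rewrite !mxE /= !(inj_eq (@vemb_inj n)) !unlift_vemb !unlift_none.
Qed.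

Lemma rank_cone_real n d (p : 'M[R]_(n, d)) s m (F : 'I_m -> 'I_n * 'I_n) :
  (\rank (row_mx (rig_mx p F) (diff_mx F s))
     <= \rank (rig_mx (cone_real p s) (lift_edge \o F)))%N.
Proof.
by rewrite -(rig_mx_cone_base p s) -(rig_mx_cone_last p) -mul_mx_row mxrankM_maxl.
Qed.

End ConeRealization.

Section Laplacian.
Variable R : comNzRingType.

Definition incid n (e : 'I_n * 'I_n) (u : 'I_n) : R := (u == e.1)%:R - (u == e.2)%:R.

Definition laplacian n m (F : 'I_m -> 'I_n * 'I_n) (w : 'rV[R]_m) : 'M[R]_n :=
  \matrix_(u, v) \sum_i w 0 i * (incid (F i) u * incid (F i) v).

Lemma sum_mul_incid n (x : 'I_n -> R) e : \sum_u x u * incid e u = x e.1 - x e.2.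
Proof.
have sum_delta a : \sum_u x u * (u == a)%:R = x a.
  rewrite (bigD1 a) //= eqxx mulr1 big1 ?addr0 // => u /negbTE ->.
  by rewrite mulr0.
by rewrite -!sum_delta -sumrB; apply: eq_bigr => u _; rewrite mulrBr.
Qed.

Lemma tr_laplacian n m (F : 'I_m -> 'I_n * 'I_n) w : (laplacian F w)^T = laplacian F w.
Proof.
apply/matrixP => u v; rewrite !mxE; apply: eq_bigr => i _.
by rewrite [_ * incid _ _]mulrC.
Qed.

Lemma laplacianD n m (F : 'I_m -> 'I_n * 'I_n) a b w1 w2 :
  laplacian F (a *: w1 + b *: w2) = a *: laplacian F w1 + b *: laplacian F w2.
Proof.
apply/matrixP => u v; rewrite !mxE !mulr_sumr -big_split; apply: eq_bigr => i _.
by rewrite !mxE mulrDl !mulrA.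
Qed.

Lemma mul_diff_mx n m (F : 'I_m -> 'I_n * 'I_n) (s : 'rV[R]_n) (w : 'rV[R]_m) :
  (forall i, (F i).1 != (F i).2) -> w *m diff_mx F s = s *m laplacian F w.
Proof.
move=> loopless; apply/rowP => u; rewrite !mxE.
under [RHS]eq_bigr do rewrite mxE mulr_sumr.
rewrite exchange_big /=; apply: eq_bigr => i _.
have -> : \sum_v s 0 v * (w 0 i * (incid (F i) v * incid (F i) u)) =
          w 0 i * incid (F i) u * \sum_v s 0 v * incid (F i) v.
  by rewrite mulr_sumr; apply: eq_bigr => v _; ring.
rewrite sum_mul_incid mxE -mulrA; congr (_ * _); rewrite /incid.
have [->|ne1] := eqVneq u (F i).1.
  by rewrite ?eqxx (negbTE (loopless i)) subr0 mul1r.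
have [_|ne2] := eqVneq u (F i).2; first by rewrite sub0r mulN1r opprB.
by rewrite subrr mul0r.
Qed.

Lemma incid_ends_eq0 n (e e' : 'I_n * 'I_n) :
  (e.1 < e.2)%N -> (e'.1 < e'.2)%N -> e' != e -> incid e' e.1 * incid e' e.2 = 0.
Proof.
case: e e' => [a b] [a' b'] /= lt_ab lt_ab' ne; rewrite /incid -!val_eqE /=.
case: eqP => ?; case: eqP => ?; case: eqP => ?; case: eqP => ?;
  rewrite /= ?subrr ?mul0r ?mulr0 //; try lia.
all: case/eqP: ne; congr pair; apply/val_inj => /=; lia.
Qed.

Lemma laplacian_eq0 n m (F : 'I_m -> 'I_n * 'I_n) w :
  (forall i, ((F i).1 < (F i).2)%N) -> injective F -> laplacian F w = 0 -> w = 0.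
Proof.
move=> simple injF /matrixP L0; apply/rowP => i; move: (L0 (F i).1 (F i).2).
rewrite !mxE (bigD1 i) //= big1 ?addr0; last first.
  move=> j ji; rewrite incid_ends_eq0 ?mulr0 //.
  by apply: contra ji => /eqP /injF ->.
have ne : (F i).2 != (F i).1 by rewrite -val_eqE /= neq_ltn simple orbT.
rewrite /incid !eqxx (negbTE ne) eq_sym (negbTE ne) subr0 sub0r mulrN1 mulrN.
by rewrite mulr1 => /eqP; rewrite oppr_eq0 => /eqP.
Qed.

End Laplacian.

Definition lin_indep2 (R : nzRingType) (V : lmodType R) (u v : V) : Prop :=
  forall a b : R, a *: u + b *: v = 0 -> a = 0 /\ b = 0.

Section LinearIndependence.
Variable R : fieldType.

Lemma lin_indep2C (V : lmodType R) (u v : V) : lin_indep2 u v -> lin_indep2 v u.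
Proof. by move=> ind a b; rewrite addrC => /ind []. Qed.

Lemma lin_indep2_subr (V : lmodType R) (u v : V) c :
  lin_indep2 u (v - c *: u) -> lin_indep2 u v.
Proof.
move=> ind a b abuv; have [+ b0] : a + b * c = 0 /\ b = 0.
  by apply: ind; rewrite scalerDl scalerBr scalerA addrA addrAC addrK.
by rewrite b0 mul0r addr0.
Qed.

Lemma dependent_rV n (u v : 'rV[R]_n) :
  ~ lin_indep2 u v -> v != 0 -> exists c, u = c *: v.
Proof.
move=> dep v0; apply: NNPP => no_c; apply: dep => a b abuv.
have [a0|a0] := eqVneq a 0.
  move: abuv; rewrite a0 scale0r add0r => /eqP; rewrite scaler_eq0 (negbTE v0) orbF.
  by move/eqP.
case: no_c; exists (- (a^-1 * b)); apply: (scalerI a0).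
rewrite scalerA mulrN mulrA divff // mul1r scaleNr.
by apply/eqP; rewrite -addr_eq0 abuv.
Qed.

Lemma row_free_lin_indep2 m n (W : 'M[R]_(m, n)) i j :
  row_free W -> i != j -> lin_indep2 (row i W) (row j W).
Proof.
move=> freeW ij a b; rewrite !rowE !scalemxAl -mulmxDl -(mul0mx 1 W).
move/(row_free_inj freeW)/matrixP => ab0.
have := ab0 0 i; have := ab0 0 j; rewrite !mxE !eqxx eq_sym (negbTE ij) /=.
by rewrite !mulr0 !mulr1 add0r addr0 => -> ->.
Qed.

Lemma rank_col_mx_lin_indep2 n (u v : 'rV[R]_n) :
  lin_indep2 u v -> \rank (col_mx u v) = 2.
Proof.
move=> ind; apply/eqP; change (row_free (col_mx u v)); rewrite -kermx_eq0.
apply/eqP/row_matrixP => i; rewrite row0.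
set k := row i _; have : k *m col_mx u v = 0 by rewrite -row_mul mulmx_ker row0.
rewrite -[k]hsubmxK [lsubmx k]mx11_scalar [rsubmx k]mx11_scalar.
by rewrite mul_row_col !mul_scalar_mx => /ind [-> ->]; rewrite raddf0 row_mx0.
Qed.

Lemma mulmx_rV_eq0 m n (M : 'M[R]_(m, n)) : (forall y : 'rV_m, y *m M = 0) -> M = 0.
Proof. by move=> yM0; apply/row_matrixP => i; rewrite rowE yM0 row0. Qed.

End LinearIndependence.

Section SymmetricPencil.
Variable R : realFieldType.

Definition dotmx n (u v : 'rV[R]_n) : R := (u *m v^T) 0 0.

Lemma dotmxZl n c (u v : 'rV[R]_n) : dotmx (c *: u) v = c * dotmx u v.
Proof. by rewrite /dotmx -scalemxAl mxE. Qed.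

Lemma dotmxDl n (u w v : 'rV[R]_n) : dotmx (u + w) v = dotmx u v + dotmx w v.
Proof. by rewrite /dotmx mulmxDl mxE. Qed.

Lemma dotmxC n (u v : 'rV[R]_n) : dotmx u v = dotmx v u.
Proof.
by rewrite /dotmx -[in RHS](trmxK v) -trmx_mul [RHS]mxE.
Qed.

Lemma dotmx_mul_sym n (M : 'M[R]_n) (y a : 'rV[R]_n) :
  M^T = M -> dotmx (y *m M) a = dotmx (a *m M) y.
Proof. by move=> symM; rewrite dotmxC /dotmx trmx_mul symM mulmxA. Qed.

Lemma dotmx_self_neq0 n (a : 'rV[R]_n) : a != 0 -> dotmx a a != 0.
Proof.
move=> a0; apply: contra a0; rewrite /dotmx mxE.
under eq_bigr do rewrite mxE -expr2.
move/eqP/psumr_eq0P => sum0; apply/eqP/rowP => i; apply/eqP.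
by rewrite mxE -sqrf_eq0 sum0 // => j _; rewrite sqr_ge0.
Qed.

Lemma sym_image_line n (M : 'M[R]_n) (a : 'rV[R]_n) : M^T = M -> a != 0 ->
  (forall y, exists c, y *m M = c *: a) ->
  exists l, forall y, y *m M = (l * dotmx y a) *: a.
Proof.
move=> symM a0 line; have [ca Ma] := line a; have aa0 := dotmx_self_neq0 a0.
exists (ca / dotmx a a) => y; have [cy My] := line y.
have e : cy * dotmx a a = ca * dotmx y a.
  by rewrite -dotmxZl -My dotmx_mul_sym // Ma dotmxZl dotmxC.
by rewrite My; congr (_ *: _); apply: (mulIf aa0); rewrite e; field.
Qed.

Section LocallyDependent.
Variables (n : nat) (A B : 'M[R]_n).
Hypotheses (symA : A^T = A) (symB : B^T = B).
Hypothesis dep : forall s : 'rV[R]_n, ~ lin_indep2 (s *m A) (s *m B).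
Variable x : 'rV[R]_n.
Hypotheses (xB0 : x *m B = 0) (xA0 : x *m A != 0).

Lemma kernel_image_line y : exists c, y *m B = c *: (x *m A).
Proof.
have [yB0|yB0] := eqVneq (y *m B) 0; first by exists 0; rewrite yB0 scale0r.
have xyB0 : (x + y) *m B != 0 by rewrite mulmxDl xB0 add0r.
have [c0 yA] := dependent_rV (@dep y) yB0.
have [c1] := dependent_rV (@dep (x + y)) xyB0.
rewrite !mulmxDl xB0 add0r => xyA.
have xA : x *m A = (c1 - c0) *: (y *m B) by rewrite scalerBl -xyA -yA addrK.
have c10 : c1 - c0 != 0 by apply: contraNneq xA0 => c0'; rewrite xA c0' scale0r.
by exists (c1 - c0)^-1; rewrite xA scalerA mulVf // scale1r.
Qed.

Lemma locally_dependent_kernel_eq0 : B = 0.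
Proof.
have [l Bl] := sym_image_line symB xA0 kernel_image_line.
have [l0|l0] := eqVneq l 0.
  by apply: mulmx_rV_eq0 => y; rewrite Bl l0 mul0r scale0r.
have xa0 : dotmx x (x *m A) = 0.
  move: xB0; rewrite Bl => /eqP; rewrite scaler_eq0 (negbTE xA0) orbF.
  by rewrite mulf_eq0 (negbTE l0) => /eqP.
(* x B = 0 forces x to be orthogonal to the common image line of A and B,
   while x A spans that line. *)
have lineA1 y : dotmx y (x *m A) != 0 -> exists c, y *m A = c *: (x *m A).
  move=> ya0; have yB0 : y *m B != 0 by rewrite Bl scaler_eq0 negb_or mulf_neq0.
  have [c yA] := dependent_rV (@dep y) yB0.
  by exists (c * (l * dotmx y (x *m A))); rewrite yA Bl scalerA.
have lineA y : exists c, y *m A = c *: (x *m A).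
  have [ya0|] := eqVneq (dotmx y (x *m A)) 0; last exact: lineA1.
  have [c1 yaA] : exists c, (y + x *m A) *m A = c *: (x *m A).
    by apply: lineA1; rewrite dotmxDl ya0 add0r dotmx_self_neq0.
  have [c2 aA] := lineA1 (x *m A) (dotmx_self_neq0 xA0).
  by exists (c1 - c2); rewrite scalerBl -yaA -aA mulmxDl addrK.
have [l' Al'] := sym_image_line symA xA0 lineA.
by case/negP: xA0; rewrite {1}Al' xa0 mulr0 scale0r.
Qed.

End LocallyDependent.

Lemma sym_pencil_lin_indep2 n (A B : 'M[R]_n) : A^T = A -> B^T = B ->
  lin_indep2 A B -> exists s : 'rV_n, lin_indep2 (s *m A) (s *m B).
Proof.
move=> symA symB indAB; apply: NNPP => /not_ex_all_not dep.
have [x xA0] : exists x : 'rV_n, x *m A != 0.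
  apply: NNPP => /not_ex_all_not xA0.
  have A0 : A = 0 by apply: mulmx_rV_eq0 => y; apply/eqP/negPn/negP/xA0.
  have := indAB 1 0; rewrite A0 scaler0 scale0r addr0 => /(_ erefl) [/eqP].
  by rewrite oner_eq0.
have [mu xB] := dependent_rV (fun ind => @dep x (lin_indep2C ind)) xA0.
have B'0 : B - mu *: A = 0.
  apply: (locally_dependent_kernel_eq0 symA _ _ (x := x)) => //.
  - by rewrite linearB linearZ /= symA symB.
  - move=> s ind; apply: (@dep s (lin_indep2_subr (c := mu) _)).
    by rewrite mulmxBr -scalemxAr in ind.
  - by rewrite mulmxBr -scalemxAr xB subrr.
have := indAB mu (-1); rewrite scaleN1r -opprB B'0 oppr0 => /(_ erefl) [_ /eqP].
by rewrite oppr_eq0 oner_eq0.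
Qed.

End SymmetricPencil.

Lemma lift_edges_rank (R : realType) n d (G : edgeset n) (p : 'M[R]_(n, d))
    (q : 'M[R]_(n.+1, d.+1)) :
  simple_edges G -> generic q -> (rig_rank p G + 2 <= #|G|)%N ->
  (rig_rank p G + 2 <= rig_rank q (lift_edge @: G))%N.
Proof.
move=> simpleG gen_q two_stresses.
pose F := @enum_val _ G.
have injF : injective F := @enum_val_inj _ G.
have simpleF i : ((F i).1 < (F i).2)%N := simpleG _ (enum_valP i).
have looplessF i : (F i).1 != (F i).2 by rewrite -val_eqE /= neq_ltn simpleF.
set M := rig_mx p F.
have rkM : rig_rank p G = \rank M := rig_rank_enum p G.
have rkq : rig_rank q (lift_edge @: G) = \rank (rig_mx q (lift_edge \o F)).
  apply: rig_rank_mx => [i|_ /imsetP [e eG ->]]; first exact/imset_f/enum_valP.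
  by exists (enum_rank_in eG e); rewrite /= /F enum_rankK_in.
have ker2 : (2 <= \rank (kermx M))%N.
  by rewrite mxrank_ker -rkM; change (2 <= #|G| - rig_rank p G)%N; lia.
pose W := row_base (kermx M).
pose w1 := row (Ordinal (ltnW ker2)) W; pose w2 := row (Ordinal ker2) W.
have ind_w : lin_indep2 w1 w2 by apply: row_free_lin_indep2; rewrite ?row_base_free.
have ind_L : lin_indep2 (laplacian F w1) (laplacian F w2).
  by move=> a b; rewrite -laplacianD => /(laplacian_eq0 simpleF injF)/ind_w.
have [s ind_s] := sym_pencil_lin_indep2 (tr_laplacian F w1) (tr_laplacian F w2) ind_L.
have ker_s : (2 <= \rank (kermx M *m diff_mx F s))%N.
  have sub_w : (col_mx w1 w2 <= kermx M)%MS.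
    by rewrite col_mx_sub !(submx_trans (row_sub _ _)) // eq_row_base.
  apply: leq_trans (mxrankS (submxMr _ sub_w)).
  by rewrite mul_col_mx !mul_diff_mx // rank_col_mx_lin_indep2.
rewrite rkM rkq; apply: leq_trans (generic_rank_max (cone_real p s) _ gen_q).
apply: leq_trans (rank_cone_real p s F).
by apply: leq_trans (rank_row_mx_ker M (diff_mx F s)); rewrite leq_add2l.
Qed.

Theorem corollary4p8 (R : realType) (n d k : nat) (G : edgeset n)
    (p : 'M[R]_(n, d)) (q : 'M[R]_(n.+1, d.+1)) :
  (1 <= d)%N -> (1 <= k)%N ->
  simple_edges G ->
  generic p -> generic q ->
  kfold_circuit (rig_rank p) k G ->
  (exists P : {set edgeset n.+1},
     principal_partition (rig_rank q) k (cone G) P /\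
     exists2 A, A \in P & cone_star n \subset A) ->
  k = 1%N.
Proof.
move=> _ k_gt0 simpleG _ gen_q [_ rkG] [P [[_ ppP] [A AP starA]]].
have [_ rkX] := (ppP _ (subsetDl (cone G) A)).2 (ex_intro2 _ _ A AP erefl).
have := rig_rank_subset q (cone_diff_star G starA); rewrite card_lift_edges.
have [k2|] := leqP 2 k; last lia.
have := @lift_edges_rank _ _ _ G p q simpleG gen_q; lia.
Qed.
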